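(* Let $\mathfrak L$ be a complete lattice and $\lambda\in\mathcal O$ a nonzero limit ordinal. (1) If $h:\mathcal O\times\mathcal O\to\mathfrak L$ is antitone in its first argument (i.e. $\alpha\le\alpha'$ implies $h(\alpha',\beta)\sqsubseteq h(\alpha,\beta)$ for all $\beta$), then $\limsup_{\beta\to\lambda}h(\beta,\beta)\sqsubseteq\limsup_{\alpha\to\lambda}\limsup_{\beta\to\lambda}h(\alpha,\beta)$. (2) If $h:\mathcal O\times\mathcal O\to\mathfrak L$ is monotone in its first argument, then $\liminf_{\alpha\to\lambda}\liminf_{\beta\to\lambda}h(\alpha,\beta)\sqsubseteq\liminf_{\beta\to\lambda}h(\beta,\beta)$.
   Context: $\mathcal O$ is the set of ordinals $\le\top_{\mathsf{ord}}$ for a fixed ordinal $\top_{\mathsf{ord}}$ ($=\beth_\omega$). For $f:\mathcal O\to\mathfrak L$ and a nonzero limit $\lambda$: $\liminf_{\alpha\to\lambda}f(\alpha)=\sup_{\alpha_0<\lambda}\inf_{\alpha_0\le\alpha<\lambda}f(\alpha)$, $\limsup_{\alpha\to\lambda}f(\alpha)=\inf_{\alpha_0<\lambda}\sup_{\alpha_0\le\alpha<\lambda}f(\alpha)$. *)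

From Stdlib Require Import Relations Wellfounded.

Record CompleteLattice := {
  cl_car :> Type;
  cl_le : cl_car -> cl_car -> Prop;
  cl_sup : (cl_car -> Prop) -> cl_car;
  cl_inf : (cl_car -> Prop) -> cl_car;
  cl_refl : forall x, cl_le x x;
  cl_trans : forall x y z, cl_le x y -> cl_le y z -> cl_le x z;
  cl_antisym : forall x y, cl_le x y -> cl_le y x -> x = y;
  cl_sup_ub : forall (A : cl_car -> Prop) x, A x -> cl_le x (cl_sup A);
  cl_sup_least : forall (A : cl_car -> Prop) u,
      (forall x, A x -> cl_le x u) -> cl_le (cl_sup A) u;
  cl_inf_lb : forall (A : cl_car -> Prop) x, A x -> cl_le (cl_inf A) x;
  cl_inf_greatest : forall (A : cl_car -> Prop) u,
      (forall x, A x -> cl_le u x) -> cl_le u (cl_inf A)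
}.

(** The ordinal segment O = {alpha | alpha <= top}: modelled as a
    well-ordered set (strict total, well-founded order) with a greatest
    element. *)
Record OrdinalSegment := {
  os_car :> Type;
  os_lt : os_car -> os_car -> Prop;
  os_top : os_car;
  os_irrefl : forall a, ~ os_lt a a;
  os_trans : forall a b c, os_lt a b -> os_lt b c -> os_lt a c;
  os_total : forall a b, os_lt a b \/ a = b \/ os_lt b a;
  os_wf : well_founded os_lt;
  os_top_max : forall a, a = os_top \/ os_lt a os_top
}.

Definition os_le (O : OrdinalSegment) (a b : O) : Prop := os_lt O a b \/ a = b.

(** Nonzero limit ordinal: something lies below it, and it is not a successor,
    i.e. below it there is no largest element. *)
Definition nonzero_limit (O : OrdinalSegment) (lam : O) : Prop :=
  (exists a, os_lt O a lam) /\
  (forall a, os_lt O a lam -> exists b, os_lt O a b /\ os_lt O b lam).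

Definition tail_inf (O : OrdinalSegment) (L : CompleteLattice) (f : O -> L)
  (lam a0 : O) : L :=
  cl_inf L (fun y => exists a, os_le O a0 a /\ os_lt O a lam /\ y = f a).

Definition tail_sup (O : OrdinalSegment) (L : CompleteLattice) (f : O -> L)
  (lam a0 : O) : L :=
  cl_sup L (fun y => exists a, os_le O a0 a /\ os_lt O a lam /\ y = f a).

Definition liminf (O : OrdinalSegment) (L : CompleteLattice) (f : O -> L)
  (lam : O) : L :=
  cl_sup L (fun y => exists a0, os_lt O a0 lam /\ y = tail_inf O L f lam a0).

Definition limsup (O : OrdinalSegment) (L : CompleteLattice) (f : O -> L)
  (lam : O) : L :=
  cl_inf L (fun y => exists a0, os_lt O a0 lam /\ y = tail_sup O L f lam a0).


(* Both inequalities come from one fact about limsup: for every a0 < lam the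
   diagonal b |-> h b b is eventually (from a0 on) below the row b |-> h a0 b,
   because h is antitone in its first argument; so limsup of the diagonal is
   below limsup of every row a0, which is itself below the tail supremum of the
   rows from a0 on.  Taking the infimum over a0 gives (1), and (2) is (1) read
   in the dual lattice. *)

Lemma os_le_refl (O : OrdinalSegment) (a : O) : os_le O a a.
Proof. now right. Qed.

Lemma os_le_trans (O : OrdinalSegment) (a b c : O) :
  os_le O a b -> os_le O b c -> os_le O a c.
Proof.
  intros [Hab | <-] [Hbc | <-]; unfold os_le; auto.
  left; eapply os_trans; eauto.
Qed.

Lemma os_common_upper_bound (O : OrdinalSegment) (lam a b : O) :
  os_lt O a lam -> os_lt O b lam ->
  exists c, os_le O a c /\ os_le O b c /\ os_lt O c lam.
Proof.
  intros Ha Hb.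
  destruct (os_total O a b) as [Hab | [<- | Hba]].
  - exists b; unfold os_le; auto.
  - exists a; unfold os_le; auto.
  - exists a; unfold os_le; auto.
Qed.

Definition dual_lattice (L : CompleteLattice) : CompleteLattice := {|
  cl_car := L;
  cl_le := fun x y => cl_le L y x;
  cl_sup := cl_inf L;
  cl_inf := cl_sup L;
  cl_refl := cl_refl L;
  cl_trans := fun x y z Hxy Hyz => cl_trans L z y x Hyz Hxy;
  cl_antisym := fun x y Hxy Hyx => cl_antisym L x y Hyx Hxy;
  cl_sup_ub := cl_inf_lb L;
  cl_sup_least := cl_inf_greatest L;
  cl_inf_lb := cl_sup_ub L;
  cl_inf_greatest := cl_sup_least L
|}.

Section Limsup.

Variables (O : OrdinalSegment) (L : CompleteLattice) (lam : O).

Lemma le_tail_sup (f : O -> L) (a0 a : O) :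
  os_le O a0 a -> os_lt O a lam -> cl_le L (f a) (tail_sup O L f lam a0).
Proof. intros Ha0 Ha; apply cl_sup_ub; eauto. Qed.

Lemma limsup_le_tail_sup (f : O -> L) (a0 : O) :
  os_lt O a0 lam -> cl_le L (limsup O L f lam) (tail_sup O L f lam a0).
Proof. intros Ha0; apply cl_inf_lb; eauto. Qed.

Lemma limsup_le_eventually (f g : O -> L) (a0 : O) :
  os_lt O a0 lam ->
  (forall a, os_le O a0 a -> os_lt O a lam -> cl_le L (f a) (g a)) ->
  cl_le L (limsup O L f lam) (limsup O L g lam).
Proof.
  intros Ha0 Hfg.
  apply cl_inf_greatest; intros y [b0 [Hb0 ->]].
  destruct (os_common_upper_bound O lam a0 b0 Ha0 Hb0) as [c [Hac [Hbc Hc]]].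
  apply (cl_trans L _ (tail_sup O L f lam c)); [now apply limsup_le_tail_sup |].
  apply cl_sup_least; intros x [a [Hca [Ha ->]]].
  apply (cl_trans L _ (g a)).
  - apply Hfg; [eapply os_le_trans |]; eauto.
  - apply le_tail_sup; [eapply os_le_trans |]; eauto.
Qed.

Lemma limsup_diag_le_limsup_limsup (h : O -> O -> L) :
  (forall a a' b, os_le O a a' -> cl_le L (h a' b) (h a b)) ->
  cl_le L (limsup O L (fun b => h b b) lam)
          (limsup O L (fun a => limsup O L (fun b => h a b) lam) lam).
Proof.
  intros Hh.
  apply cl_inf_greatest; intros y [a0 [Ha0 ->]].
  apply (cl_trans L _ (limsup O L (fun b => h a0 b) lam)).
  - apply limsup_le_eventually with a0; auto.
  - apply (le_tail_sup (fun a => limsup O L (fun b => h a b) lam));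
      auto using os_le_refl.
Qed.

End Limsup.

Theorem lemma4p12 (O : OrdinalSegment) (L : CompleteLattice) (lam : O)
  (Hlam : nonzero_limit O lam) :
  (forall h : O -> O -> L,
     (forall a a' b, os_le O a a' -> cl_le L (h a' b) (h a b)) ->
     cl_le L (limsup O L (fun b => h b b) lam)
             (limsup O L (fun a => limsup O L (fun b => h a b) lam) lam))
  /\
  (forall h : O -> O -> L,
     (forall a a' b, os_le O a a' -> cl_le L (h a b) (h a' b)) ->
     cl_le L (liminf O L (fun a => liminf O L (fun b => h a b) lam) lam)
             (liminf O L (fun b => h b b) lam)).
Proof.
  split; intros h Hh.
  - exact (limsup_diag_le_limsup_limsup O L lam h Hh).
  - exact (limsup_diag_le_limsup_limsup O (dual_lattice L) lam h Hh).
Qed.
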